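(* Let $k$ be a field, $\mathbf C$ a finite category, $\mathcal{A}$ a presheaf of $k$-algebras on $\mathbf C$ and $\mathcal{M}$ a presheaf of $\mathcal{A}$-bimodules. Then for every $q\in\mathbb N$ the cochain complex $(C^{*,q}(\mathcal{A},\mathcal{M}),d_{\mathrm{simp}})$ (Hochschild degree $q$ fixed, simplicial degree varying) is isomorphic to the Baues–Wirsching cochain complex $(C^*_{BW}(\mathbf C,\mathcal{C}^q_{\mathrm{HH}}(\mathcal{A},\mathcal{M})),\delta_{BW})$.
   Context: Presheaf of $k$-algebras: functor $\mathcal{A}\colon\mathbf C^{\mathrm{op}}\to\mathbf{Alg}_k$ (associative unital finite-dimensional). Presheaf of $\mathcal{A}$-bimodules: functor $\mathcal{M}$ on $\mathbf C^{\mathrm{op}}$ with each $\mathcal{M}(c)$ an $\mathcal{A}(c)$-bimodule and each $\mathcal{M}(d)\to\mathcal{M}(c)$ (for $c\to d$) an $\mathcal{A}(d)$-bimodule map. $C^q_{\mathrm{HH}}(B,N)=\mathrm{Hom}_k(B^{\otimes q},N)$. Gerstenhaber–Schack cochains: for strings $\sigma=(c_0\to\cdots\to c_p)$ of composable morphisms, $C^{p,q}(\mathcal{A},\mathcal{M})=\prod_\sigma C^q_{\mathrm{HH}}(\mathcal{A}(c_p),\mathcal{M}(c_0))$ and $(d_{\mathrm{simp}}\Gamma)^\sigma=T\circ\Gamma^{\partial_0\sigma}+\sum_{r=1}^{p-1}(-1)^r\Gamma^{\partial_r\sigma}+(-1)^p\Gamma^{\partial_p\sigma}\circ\phi^{\otimes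 q}$, where $\partial_r\sigma$ deletes $c_r$, $T\colon\mathcal{M}(c_1)\to\mathcal{M}(c_0)$ is induced by $c_0\to c_1$ and $\phi\colon\mathcal{A}(c_p)\to\mathcal{A}(c_{p-1})$ by $c_{p-1}\to c_p$. Twisted arrow category $\mathrm{Tw}\,\mathbf C$: objects morphisms $f\colon c\to d$; morphisms $f\to g$ ($g\colon c'\to d'$) are pairs $(\alpha\colon d\to d',\beta\colon c'\to c)$ with $g=\alpha f\beta$. A natural system is a functor $F\colon\mathrm{Tw}\,\mathbf C\to\mathbf{Ab}$; write $\alpha_*=F(\alpha,1)$, $\beta^*=F(1,\beta)$. Baues–Wirsching complex: $C^n_{BW}(\mathbf C,F)=\prod F(f_1\circ\cdots\circ f_n)$ over strings $c_n\xrightarrow{f_n}c_{n-1}\to\cdots\xrightarrow{f_1}c_0$, with $(\delta_{BW}\Gamma)(f_1,\dots,f_n)={f_1}_*\Gamma(f_2,\dots,f_n)+\sum_{i=1}^{n-1}(-1)^i\Gamma(f_1,\dots,f_if_{i+1},\dots,f_n)+(-1)^n f_n^*\Gamma(f_1,\dots,f_{n-1})$. The natural system $\mathcal{C}^q_{\mathrm{HH}}(\mathcal{A},\mathcal{M})$ sends $f\colon c\to d$ to $C^q_{\mathrm{HH}}(\mathcal{A}(d),\mathcal{M}(c))$ and $(\alpha,\beta)$ to $\Gamma\mapsto\mathcal{M}(\beta)\circ\Gamma\circ\mathcal{A}(\alpha)^{\otimes q}$. *)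

From HB Require Import structures.
From mathcomp Require Import all_boot all_algebra.

Set Implicit Arguments.
Unset Strict Implicit.
Unset Printing Implicit Defensive.

Import GRing.Theory.
Local Open Scope ring_scope.

(* Finite categories.  [comp f g] is "g after f" (diagrammatic order). *)
Record FinCat := FinCatMk {
  Obj : finType;
  Hom : Obj -> Obj -> finType;
  idm : forall a, Hom a a;
  comp : forall a b c, Hom a b -> Hom b c -> Hom a c;
  comp_id_l : forall a b (f : Hom a b), comp (idm a) f = f;
  comp_id_r : forall a b (f : Hom a b), comp f (idm b) = f;
  comp_assoc : forall a b c d (f : Hom a b) (g : Hom b c) (h : Hom c d),
      comp (comp f g) h = comp f (comp g h)
}.
Arguments idm {_} a.
Arguments comp {_ a b c} f g.

(* Associative unital finite-dimensional k-algebras (the zero algebra  *)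
(* is allowed, so we do not use MathComp's nz-ring based algType).     *)
Record kAlgebra (k : fieldType) := KAlgebra {
  acarrier :> lmodType k;
  amul : acarrier -> acarrier -> acarrier;
  aone : acarrier;
  amulA : forall x y z, amul x (amul y z) = amul (amul x y) z;
  amul1x : forall x, amul aone x = x;
  amulx1 : forall x, amul x aone = x;
  amul_linl : forall (c : k) x y z, amul (c *: x + y) z = c *: amul x z + amul y z;
  amul_linr : forall (c : k) x y z, amul z (c *: x + y) = c *: amul z x + amul z y;
  afindim : exists n (e : 'I_n -> acarrier),
      forall x, exists a : 'I_n -> k, x = \sum_(i < n) a i *: e i
}.
Arguments amul {k} _ x y.
Arguments aone {k} _.

Record AlgPresheaf (k : fieldType) (C : FinCat) := AlgPresheafMk {
  alg : Obj C -> kAlgebra k;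
  ares : forall a b, Hom a b -> alg b -> alg a;
  ares_lin : forall a b (f : Hom a b) (c : k) x y,
      ares f (c *: x + y) = c *: ares f x + ares f y;
  ares_mul : forall a b (f : Hom a b) x y,
      ares f (amul _ x y) = amul _ (ares f x) (ares f y);
  ares_one : forall a b (f : Hom a b), ares f (aone _) = aone _;
  ares_id : forall a x, ares (idm a) x = x;
  ares_comp : forall a b c (f : Hom a b) (g : Hom b c) x,
      ares (comp f g) x = ares f (ares g x)
}.
Arguments alg {k C} _ a.
Arguments ares {k C} _ {a b} f x.

Record BimodPresheaf (k : fieldType) (C : FinCat) (A : AlgPresheaf k C) :=
 BimodPresheafMk {
  bmod : Obj C -> lmodType k;
  lact : forall a, alg A a -> bmod a -> bmod a;
  ract : forall a, bmod a -> alg A a -> bmod a;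
  lact_linl : forall a (c : k) (x y : alg A a) m,
      lact (c *: x + y) m = c *: lact x m + lact y m;
  lact_linr : forall a (c : k) (x : alg A a) m n,
      lact x (c *: m + n) = c *: lact x m + lact x n;
  ract_linl : forall a (c : k) (x : alg A a) m n,
      ract (c *: m + n) x = c *: ract m x + ract n x;
  ract_linr : forall a (c : k) (x y : alg A a) m,
      ract m (c *: x + y) = c *: ract m x + ract m y;
  lact_mul : forall a (x y : alg A a) m, lact (amul _ x y) m = lact x (lact y m);
  lact_one : forall a m, lact (aone (alg A a)) m = m;
  ract_mul : forall a (x y : alg A a) m, ract m (amul _ x y) = ract (ract m x) y;
  ract_one : forall a m, ract m (aone (alg A a)) = m;
  lract : forall a (x y : alg A a) m, ract (lact x m) y = lact x (ract m y);
  mres : forall a b, Hom a b -> bmod b -> bmod a;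
  mres_lin : forall a b (f : Hom a b) (c : k) m n,
      mres f (c *: m + n) = c *: mres f m + mres f n;
  mres_lact : forall a b (f : Hom a b) x m,
      mres f (lact x m) = lact (ares A f x) (mres f m);
  mres_ract : forall a b (f : Hom a b) m x,
      mres f (ract m x) = ract (mres f m) (ares A f x);
  mres_id : forall a m, mres (idm a) m = m;
  mres_comp : forall a b c (f : Hom a b) (g : Hom b c) m,
      mres (comp f g) m = mres f (mres g m)
}.
Arguments bmod {k C A} _ a.
Arguments mres {k C A} _ {a b} f m.

(* Hochschild cochains C^q_HH(B, N) = Hom_k(B^{(x)q}, N), represented  *)
(* (universal property of the tensor power) as k-multilinear maps      *)
(* B^q -> N.  [HHraw] is the ambient function type, [multilinear] the  *)
(* condition cutting out the cochains.                                 *)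
Definition HHraw (k : fieldType) (q : nat) (B N : lmodType k) :=
  ('I_q -> B) -> N.

Definition multilinear (k : fieldType) (q : nat) (B N : lmodType k)
    (g : ('I_q -> B) -> N) : Prop :=
  forall (i : 'I_q) (x : 'I_q -> B) (c : k) (u v : B),
    g (fun j => if j == i then c *: u + v else x j)
    = c *: g (fun j => if j == i then u else x j)
      + g (fun j => if j == i then v else x j).

(* Gerstenhaber-Schack strings  sigma = (c_0 -> c_1 -> ... -> c_p),     *)
(* [gsstr p c_0 c_p]; built by prepending the first arrow c_0 -> c_1.  *)
Section Strings.
Variable C : FinCat.

Inductive gsstr : nat -> Obj C -> Obj C -> Type :=
| gs0 (c : Obj C) : gsstr 0 c c
| gsS (p : nat) (a c b : Obj C) (f : Hom a c) (rest : gsstr p c b) :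
    gsstr p.+1 a b.

Definition gs_headT (n : nat) (a b : Obj C) : Type :=
  match n with 0 => unit | m.+1 => {c : Obj C & (Hom a c * gsstr m c b)%type} end.

Definition gs_uncons n a b (s : gsstr n a b) : gs_headT n a b :=
  match s in gsstr n a b return gs_headT n a b with
  | gs0 _ => tt
  | gsS _ _ c _ f r => existT _ c (f, r)
  end.

(* transport of a final arrow along a length-0 string *)
Definition gs_cast0 a c b (r : gsstr 0 c b) : Hom a c -> Hom a b :=
  match r in gsstr n c' b'
        return (match n with 0 => Hom a c' -> Hom a b' | _ => unit end) with
  | gs0 _ => fun f => f
  | gsS _ _ _ _ _ _ => tt
  end.

(* last face: (c_0 -> ... -> c_n -> c_{n+1}) |-> (c_0 -> ... -> c_n),
   together with the deleted last arrow c_n -> c_{n+1} *)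
Fixpoint gs_dlast (n : nat) :
    forall a b, gsstr n.+1 a b -> {c : Obj C & (gsstr n a c * Hom c b)%type} :=
  match n with
  | 0 => fun a b s =>
      let: existT c (f, r) := (gs_uncons s : gs_headT 1 a b) in
      existT _ a (gs0 a, gs_cast0 r f)
  | n'.+1 => fun a b s =>
      let: existT c (f, r) := (gs_uncons s : gs_headT n'.+2 a b) in
      let: existT d (t, h) := gs_dlast r in
      existT _ d (gsS f t, h)
  end.

(* inner face d_i, i >= 1: deletes c_i, composing c_{i-1} -> c_i -> c_{i+1} *)
Fixpoint gs_face (i n : nat) : forall a b, gsstr n.+2 a b -> gsstr n.+1 a b :=
  match n with
  | 0 => fun a b s =>
      let: existT c (f, t) := (gs_uncons s : gs_headT 2 a b) in
      let: existT d (g, r) := (gs_uncons t : gs_headT 1 c b) in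
      gsS (comp f g) r
  | n'.+1 => fun a b s =>
      let: existT c (f, t) := (gs_uncons s : gs_headT n'.+3 a b) in
      if (i <= 1)%N then
        let: existT d (g, r) := (gs_uncons t : gs_headT n'.+2 c b) in
        gsS (comp f g) r
      else gsS f (gs_face i.-1 t)
  end.

(* Baues-Wirsching strings  c_n -f_n-> c_{n-1} -> ... -f_1-> c_0,       *)
(* [bwstr n c_n c_0]; built by prepending f_1 : c_1 -> c_0 to the      *)
(* string (f_2, ..., f_n) : c_n -> ... -> c_1.                         *)
Inductive bwstr : nat -> Obj C -> Obj C -> Type :=
| bw0 (c : Obj C) : bwstr 0 c c
| bwS (n : nat) (a c b : Obj C) (f1 : Hom c b) (rest : bwstr n a c) :
    bwstr n.+1 a b.

Fixpoint bw_comp n a b (s : bwstr n a b) : Hom a b :=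
  match s in bwstr n a b return Hom a b with
  | bw0 c => idm c
  | bwS _ _ _ _ f1 r => comp (bw_comp r) f1
  end.

Definition bw_headT (n : nat) (a b : Obj C) : Type :=
  match n with 0 => unit | m.+1 => {c : Obj C & (Hom c b * bwstr m a c)%type} end.

Definition bw_uncons n a b (s : bwstr n a b) : bw_headT n a b :=
  match s in bwstr n a b return bw_headT n a b with
  | bw0 _ => tt
  | bwS _ _ c _ f r => existT _ c (f, r)
  end.

Definition bw_cast0 a c b (r : bwstr 0 a c) : Hom c b -> Hom a b :=
  match r in bwstr n a' c'
        return (match n with 0 => Hom c' b -> Hom a' b | _ => unit end) with
  | bw0 _ => fun f => f
  | bwS _ _ _ _ _ _ => tt
  end.

(* (f_1, ..., f_n, f_{n+1}) |-> ((f_1, ..., f_n), f_{n+1}) *)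
Fixpoint bw_dlast (n : nat) :
    forall a b, bwstr n.+1 a b -> {c : Obj C & (bwstr n c b * Hom a c)%type} :=
  match n with
  | 0 => fun a b s =>
      let: existT c (f, r) := (bw_uncons s : bw_headT 1 a b) in
      existT _ b (bw0 b, bw_cast0 r f)
  | n'.+1 => fun a b s =>
      let: existT c (f, r) := (bw_uncons s : bw_headT n'.+2 a b) in
      let: existT d (t, h) := bw_dlast r in
      existT _ d (bwS f t, h)
  end.

(* (f_1, ..., f_i f_{i+1}, ..., f_{n+2}) for i >= 1 *)
Fixpoint bw_face (i n : nat) : forall a b, bwstr n.+2 a b -> bwstr n.+1 a b :=
  match n with
  | 0 => fun a b s =>
      let: existT c (f, t) := (bw_uncons s : bw_headT 2 a b) in
      let: existT d (g, r) := (bw_uncons t : bw_headT 1 a c) in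
      bwS (comp g f) r
  | n'.+1 => fun a b s =>
      let: existT c (f, t) := (bw_uncons s : bw_headT n'.+3 a b) in
      if (i <= 1)%N then
        let: existT d (g, r) := (bw_uncons t : bw_headT n'.+2 a c) in
        bwS (comp g f) r
      else bwS f (bw_face i.-1 t)
  end.

End Strings.

Arguments gs0 {C} c.
Arguments gsS {C p a c b} f rest.
Arguments bw0 {C} c.
Arguments bwS {C n a c b} f1 rest.
Arguments gs_dlast {C n a b} s.
Arguments gs_face {C} i {n a b} s.
Arguments gs_uncons {C n a b} s.
Arguments bw_dlast {C n a b} s.
Arguments bw_face {C} i {n a b} s.
Arguments bw_uncons {C n a b} s.
Arguments bw_comp {C n a b} s.

Section Complexes.
Variables (k : fieldType) (C : FinCat) (A : AlgPresheaf k C)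
          (M : BimodPresheaf A) (q : nat).

Definition GSraw (p : nat) : Type :=
  forall a b (s : @gsstr C p a b), HHraw q (alg A b) (bmod M a).

Definition is_GS_cochain p (G : GSraw p) : Prop :=
  forall a b (s : @gsstr C p a b), multilinear (G a b s).

Definition GS_add p (G H : GSraw p) : GSraw p :=
  fun a b s x => G a b s x + H a b s x.
Definition GS_scale p (c : k) (G : GSraw p) : GSraw p :=
  fun a b s x => c *: G a b s x.

Definition GS_inner (p : nat) :
    GSraw p -> forall a b, @gsstr C p.+1 a b -> HHraw q (alg A b) (bmod M a) :=
  match p as p0 return
    GSraw p0 -> forall a b, @gsstr C p0.+1 a b -> HHraw q (alg A b) (bmod M a)
  with
  | 0 => fun _ _ _ _ _ => 0
  | p'.+1 => fun G a b s x =>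
      \sum_(1 <= r < p'.+2) (-1) ^+ r *: G a b (gs_face r s) x
  end.

Definition d_simp (p : nat) (G : GSraw p) : GSraw p.+1 :=
  fun a b s x =>
    (let: existT c (f, r) := (gs_uncons s : @gs_headT C p.+1 a b) in
     mres M f (G c b r x))
    + GS_inner G s x
    + (-1) ^+ p.+1 *:
      (let: existT c (t, h) := gs_dlast s in
       G a c t (fun j => ares A h (x j))).

Definition HHnat (c d : Obj C) (f : Hom c d) : Type :=
  HHraw q (alg A d) (bmod M c).
Definition nat_push c d d' (f : Hom c d) (alpha : Hom d d')
    (G : HHnat f) : HHnat (comp f alpha) :=
  fun x => G (fun j => ares A alpha (x j)).
Definition nat_pull c' c d (beta : Hom c' c) (f : Hom c d)
    (G : HHnat f) : HHnat (comp beta f) :=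
  fun x => mres M beta (G x).

Definition BWraw (n : nat) : Type :=
  forall a b (s : @bwstr C n a b), HHnat (bw_comp s).

Definition is_BW_cochain n (G : BWraw n) : Prop :=
  forall a b (s : @bwstr C n a b), multilinear (G a b s).

Definition BW_add n (G H : BWraw n) : BWraw n :=
  fun a b s x => G a b s x + H a b s x.
Definition BW_scale n (c : k) (G : BWraw n) : BWraw n :=
  fun a b s x => c *: G a b s x.

Definition BW_inner (n : nat) :
    BWraw n -> forall a b (s : @bwstr C n.+1 a b), HHnat (bw_comp s) :=
  match n as n0 return
    BWraw n0 -> forall a b (s : @bwstr C n0.+1 a b), HHnat (bw_comp s)
  with
  | 0 => fun _ _ _ _ _ => 0
  | n'.+1 => fun G a b s x =>
      \sum_(1 <= i < n'.+2) (-1) ^+ i *: G a b (bw_face i s) x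
  end.

Definition delta_BW (n : nat) (G : BWraw n) : BWraw n.+1 :=
  fun a b s x =>
    (let: existT c (f1, r) := (bw_uncons s : @bw_headT C n.+1 a b) in
     nat_push f1 (G a c r) x)
    + BW_inner G s x
    + (-1) ^+ n.+1 *:
      (let: existT c (t, fl) := bw_dlast s in
       nat_pull fl (G c b t) x).

End Complexes.

(* Isomorphism of cochain complexes of k-vector spaces, each given as  *)
(* an ambient family X p with a predicate cutting out the cochains.    *)
Definition cochain_complexes_isomorphic (k : fieldType)
    (X Y : nat -> Type)
    (isX : forall p, X p -> Prop) (isY : forall p, Y p -> Prop)
    (addX : forall p, X p -> X p -> X p) (sclX : forall p, k -> X p -> X p)
    (addY : forall p, Y p -> Y p -> Y p) (sclY : forall p, k -> Y p -> Y p)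
    (dX : forall p, X p -> X p.+1) (dY : forall p, Y p -> Y p.+1) : Prop :=
  exists Phi : forall p, X p -> Y p,
    forall p,
      (forall G, isX p G -> isY p (Phi p G)) /\
      (forall G H, isX p G -> isX p H -> Phi p G = Phi p H -> G = H) /\
      (forall K, isY p K -> exists G, isX p G /\ Phi p G = K) /\
      (forall (c : k) G H, isX p G -> isX p H ->
         Phi p (addX p (sclX p c G) H) = addY p (sclY p c (Phi p G)) (Phi p H)) /\
      (forall G, isX p G -> Phi p.+1 (dX p G) = dY p (Phi p G)).

From HB Require Import structures.
From mathcomp Require Import all_boot all_algebra.
From mathcomp Require Import zify.
From Stdlib Require Import FunctionalExtensionality.

Set Implicit Arguments.
Unset Strict Implicit.
Unset Printing Implicit Defensive.

Import GRing.Theory.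
Local Open Scope ring_scope.

(** A Gerstenhaber-Schack string c_0 -> ... -> c_p and a Baues-Wirsching
   string c_p -f_p-> ... -f_1-> c_0 are the same composable chain read in
   opposite directions, and both complexes assign to it maps
   A(c_p)^q -> M(c_0).  Under this reversal the first GS face (apply M of
   c_0 -> c_1) is the last BW face f_p^*, the last GS face (precompose with
   A of c_(p-1) -> c_p) is the first BW face f_1_*, and the inner face d_r
   becomes the inner face of index p+1-r.  Hence the two differentials differ
   by the sign (-1)^(p+1) at every term, which is absorbed by rescaling the
   degree-p component by eps_p = (-1)^(p(p+1)/2), since
   eps_(p+1) = (-1)^(p+1) eps_p. *)

Section StringReversal.
Variable C : FinCat.

Fixpoint gs_snoc n a c b (t : @gsstr C n a c) : Hom c b -> @gsstr C n.+1 a b :=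
  match t in @gsstr _ n a c return Hom c b -> @gsstr C n.+1 a b with
  | gs0 c => fun h => gsS h (gs0 b)
  | gsS _ _ _ _ f r => fun h => gsS f (gs_snoc r h)
  end.

Fixpoint bw_snoc n a c b (fl : Hom a c) (t : @bwstr C n c b) : @bwstr C n.+1 a b :=
  match t in @bwstr _ n c b return Hom a c -> @bwstr C n.+1 a b with
  | bw0 c => fun fl => bwS fl (bw0 a)
  | bwS _ _ _ _ f1 r => fun fl => bwS f1 (bw_snoc fl r)
  end fl.

Fixpoint gs_of_bw n a b (s : @bwstr C n a b) : @gsstr C n a b :=
  match s with
  | bw0 c => gs0 c
  | bwS _ _ _ _ f1 r => gs_snoc (gs_of_bw r) f1
  end.

Fixpoint bw_of_gs n a b (s : @gsstr C n a b) : @bwstr C n a b :=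
  match s with
  | gs0 c => bw0 c
  | gsS _ _ _ _ f r => bw_snoc f (bw_of_gs r)
  end.

Lemma gsstrS_inv n a b (s : @gsstr C n.+1 a b) :
  exists c (f : Hom a c) (r : @gsstr C n c b), s = gsS f r.
Proof.
move: s; suff gen m (s : @gsstr C m a b) :
  match m return @gsstr C m a b -> Prop with
  | 0 => fun _ => True
  | m'.+1 => fun s => exists c f r, s = @gsS C m' a c b f r
  end s by exact: gen.
by case: s => // p a' c b' f r; exists c, f, r.
Qed.

Lemma bwstrS_inv n a b (s : @bwstr C n.+1 a b) :
  exists c (f : Hom c b) (r : @bwstr C n a c), s = bwS f r.
Proof.
move: s; suff gen m (s : @bwstr C m a b) :
  match m return @bwstr C m a b -> Prop with
  | 0 => fun _ => True
  | m'.+1 => fun s => exists c f r, s = @bwS C m' a c b f r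
  end s by exact: gen.
by case: s => // p a' c b' f r; exists c, f, r.
Qed.

Lemma gs_of_bw_snoc n a c b (fl : Hom a c) (t : @bwstr C n c b) :
  gs_of_bw (bw_snoc fl t) = gsS fl (gs_of_bw t).
Proof. by elim: t fl => //= m c' d b' f1 r IH fl; rewrite IH. Qed.

Lemma bw_of_gs_snoc n a c b (t : @gsstr C n a c) (h : Hom c b) :
  bw_of_gs (gs_snoc t h) = bwS h (bw_of_gs t).
Proof. by elim: t h => //= m a' c' b' f r IH h; rewrite IH. Qed.

Lemma gs_of_bwK n a b : cancel (@gs_of_bw n a b) (@bw_of_gs n a b).
Proof. by elim=> //= m a' c b' f r IH; rewrite bw_of_gs_snoc IH. Qed.

Lemma bw_of_gsK n a b : cancel (@bw_of_gs n a b) (@gs_of_bw n a b).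
Proof. by elim=> //= m a' c b' f r IH; rewrite gs_of_bw_snoc IH. Qed.

Lemma gs_dlast_snoc n a c b (t : @gsstr C n a c) (h : Hom c b) :
  gs_dlast (gs_snoc t h) = existT _ c (t, h).
Proof. by elim: t h => //= m a' c' b' f r IH h; rewrite IH. Qed.

Lemma bw_dlast_snoc n a c b (fl : Hom a c) (t : @bwstr C n c b) :
  bw_dlast (bw_snoc fl t) = existT _ c (t, fl).
Proof. by elim: t fl => //= m c' d b' f1 r IH fl; rewrite IH. Qed.

Lemma gs_dlast_of_bw n a b (s : @bwstr C n.+1 a b) :
  gs_dlast (gs_of_bw s) =
  let: existT c (f, r) := (bw_uncons s : @bw_headT C n.+1 a b) in
  existT _ c (gs_of_bw r, f).
Proof. by have [c [f [r ->]]] := bwstrS_inv s; rewrite /= gs_dlast_snoc. Qed.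

Lemma gs_uncons_of_bw n a b (s : @bwstr C n.+1 a b) :
  gs_uncons (gs_of_bw s) =
  let: existT c (t, fl) := bw_dlast s in
  (existT _ c (fl, gs_of_bw t) : @gs_headT C n.+1 a b).
Proof.
rewrite -[in RHS](gs_of_bwK s); move: (gs_of_bw s) => u.
by have [c [f [t ->]]] := gsstrS_inv u; rewrite /= bw_dlast_snoc bw_of_gsK.
Qed.

Lemma gs_face1 n a c d b (e : Hom a c) (e' : Hom c d) (s : @gsstr C n d b) :
  gs_face 1 (gsS e (gsS e' s)) = gsS (comp e e') s.
Proof. by case: n s. Qed.

Lemma gs_faceSS i n a c b (e : Hom a c) (s : @gsstr C n.+2 c b) :
  gs_face i.+2 (gsS e s) = gsS e (gs_face i.+1 s).
Proof. by []. Qed.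

Lemma bw_face1 n a c d b (f : Hom c b) (g : Hom d c) (r : @bwstr C n a d) :
  bw_face 1 (bwS f (bwS g r)) = bwS (comp g f) r.
Proof. by case: n r. Qed.

Lemma bw_faceSS i n a c b (f : Hom c b) (s : @bwstr C n.+2 a c) :
  bw_face i.+2 (bwS f s) = bwS f (bw_face i.+1 s).
Proof. by []. Qed.

Lemma gs_face_last m a c d b (t : @gsstr C m a c) (g : Hom c d) (f : Hom d b) :
  gs_face m.+1 (gs_snoc (gs_snoc t g) f) = gs_snoc t (comp g f).
Proof.
elim: t g f => // p a' c' b' e r IH g f.
by rewrite [gs_snoc (gs_snoc _ g) f]/= gs_faceSS IH.
Qed.

Lemma gs_face_snoc m a c b (t : @gsstr C m.+2 a c) (h : Hom c b) j :
  (1 <= j <= m.+1)%N -> gs_face j (gs_snoc t h) = gs_snoc (gs_face j t) h.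
Proof.
elim: m a t j => [|m IH] a t j /andP [j_gt0 j_le];
  have [c1 [e [{}t ->]]] := gsstrS_inv t; have [c2 [e' [{}t ->]]] := gsstrS_inv t.
  have -> : j = 1%N by apply/eqP; rewrite eqn_leq j_le j_gt0.
  by rewrite [gs_snoc _ h]/= !gs_face1.
case: j j_gt0 j_le => [//|[|j]] _ j_le.
  by rewrite [gs_snoc _ h]/= !gs_face1.
rewrite [gs_snoc (gsS e _) h]/= !gs_faceSS.
by rewrite -[gsS e' (gs_snoc t h)]/(gs_snoc (gsS e' t) h) IH.
Qed.

Lemma gs_of_bw_face n a b (s : @bwstr C n.+2 a b) i :
  (1 <= i <= n.+1)%N -> gs_of_bw (bw_face i s) = gs_face (n.+2 - i) (gs_of_bw s).
Proof.
elim: n b s i => [|n IH] b s i /andP [i_gt0 i_le];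
  have [c1 [f1 [{}s ->]]] := bwstrS_inv s.
  have -> : i = 1%N by apply/eqP; rewrite eqn_leq i_le i_gt0.
  have [c2 [g [{}s ->]]] := bwstrS_inv s.
  by rewrite bw_face1 [gs_of_bw (bwS f1 _)]/= gs_face_last.
case: i i_gt0 i_le => [//|[|i]] _ i_le.
  have [c2 [g [{}s ->]]] := bwstrS_inv s.
  by rewrite bw_face1 subSS subn0 [gs_of_bw (bwS f1 _)]/= gs_face_last.
rewrite bw_faceSS [gs_of_bw (bwS f1 _)]/= IH // [gs_of_bw (bwS f1 s)]/= subSS.
by rewrite gs_face_snoc //; lia.
Qed.

End StringReversal.

Section Signs.
Variable R : pzRingType.

Definition twist_sign (p : nat) : R := (-1) ^+ 'C(p.+1, 2).

Lemma twist_signS p : twist_sign p.+1 = (-1) ^+ p.+1 * twist_sign p.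
Proof. by rewrite /twist_sign binS bin1 addnC exprD. Qed.

Lemma twist_signSK p : twist_sign p.+1 * (-1) ^+ p.+1 = twist_sign p.
Proof. by rewrite twist_signS -mulrA commr_sign mulrA -expr2 sqrr_sign mul1r. Qed.

Lemma twist_sign_sqr p : twist_sign p * twist_sign p = 1.
Proof. by rewrite -expr2 sqrr_sign. Qed.

Lemma signr_subn n i : (i <= n)%N -> (-1) ^+ (n - i) = (-1) ^+ n * (-1) ^+ i :> R.
Proof. by move=> le_in; rewrite -{2}(subnK le_in) exprD -mulrA -expr2 sqrr_sign mulr1. Qed.

End Signs.

Section LinearMaps.
Variables (k : fieldType) (U V : lmodType k).

Lemma lin_comb_scalable (f : U -> V) :
  (forall c x y, f (c *: x + y) = c *: f x + f y) -> scalable f.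
Proof.
move=> f_lin c x; have f0 : f 0 = 0.
  have := f_lin 1 0 0; rewrite !scale1r !addr0 => f00.
  by apply: (@addrI _ (f 0)); rewrite addr0 -f00.
by rewrite -[c *: x]addr0 f_lin f0 addr0.
Qed.

Lemma multilinearZ q (e : k) (g : ('I_q -> U) -> V) :
  multilinear g -> multilinear (fun x => e *: g x).
Proof. by move=> g_ml i x c u v; rewrite g_ml scalerDr !scalerA mulrC. Qed.

End LinearMaps.

Section Cochains.
Variables (k : fieldType) (C : FinCat) (A : AlgPresheaf k C)
          (M : BimodPresheaf A) (q : nat).

Lemma GSraw_ext p (G H : GSraw M q p) :
  (forall a b s x, G a b s x = H a b s x) -> G = H.
Proof.
move=> GH; do 3 apply: functional_extensionality_dep => ?.
exact: functional_extensionality.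
Qed.

Lemma BWraw_ext p (G H : BWraw M q p) :
  (forall a b s x, G a b s x = H a b s x) -> G = H.
Proof.
move=> GH; do 3 apply: functional_extensionality_dep => ?.
exact: functional_extensionality.
Qed.

Definition GS_to_BW p (G : GSraw M q p) : BWraw M q p :=
  fun a b s x => twist_sign k p *: G a b (gs_of_bw s) x.

Definition BW_to_GS p (K : BWraw M q p) : GSraw M q p :=
  fun a b t x => twist_sign k p *: K a b (bw_of_gs t) x.

Lemma GS_to_BWK p : cancel (@GS_to_BW p) (@BW_to_GS p).
Proof.
move=> G; apply: GSraw_ext => a b t x.
by rewrite /GS_to_BW /BW_to_GS bw_of_gsK scalerA twist_sign_sqr scale1r.
Qed.

Lemma BW_to_GSK p : cancel (@BW_to_GS p) (@GS_to_BW p).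
Proof.
move=> K; apply: BWraw_ext => a b s x.
by rewrite /GS_to_BW /BW_to_GS gs_of_bwK scalerA twist_sign_sqr scale1r.
Qed.

Lemma GS_to_BW_cochain p (G : GSraw M q p) :
  is_GS_cochain G -> is_BW_cochain (GS_to_BW G).
Proof. by move=> G_ml a b s; apply: multilinearZ. Qed.

Lemma BW_to_GS_cochain p (K : BWraw M q p) :
  is_BW_cochain K -> is_GS_cochain (BW_to_GS K).
Proof. by move=> K_ml a b t; apply: multilinearZ. Qed.

Lemma GS_to_BW_lin p (c : k) (G H : GSraw M q p) :
  GS_to_BW (GS_add (GS_scale c G) H) = BW_add (BW_scale c (GS_to_BW G)) (GS_to_BW H).
Proof.
apply: BWraw_ext => a b s x.
by rewrite /GS_to_BW /GS_add /GS_scale /BW_add /BW_scale scalerDr !scalerA mulrC.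
Qed.

Lemma BW_inner_GS_to_BW p (G : GSraw M q p) a b (s : @bwstr C p.+1 a b) x :
  BW_inner (GS_to_BW G) s x = twist_sign k p.+1 *: GS_inner G (gs_of_bw s) x.
Proof.
case: p G s x => [|p] G s x /=; first by rewrite scaler0.
rewrite scaler_sumr big_nat_rev /=; apply: eq_big_nat => i /andP [i_gt0 i_lt].
rewrite add1n subSS /GS_to_BW gs_of_bw_face; last by lia.
rewrite subKn; last by lia.
rewrite !scalerA signr_subn; last by lia.
by rewrite [twist_sign k p.+2]twist_signS mulrAC.
Qed.

Lemma GS_to_BW_d p (G : GSraw M q p) :
  GS_to_BW (d_simp G) = delta_BW (GS_to_BW G).
Proof.
apply: BWraw_ext => a b s x.
rewrite /delta_BW BW_inner_GS_to_BW /GS_to_BW /d_simp.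
rewrite gs_dlast_of_bw gs_uncons_of_bw.
case: (bw_uncons s) => c [f1 r]; case: (bw_dlast s) => c' [t fl].
rewrite /nat_push /nat_pull (lin_comb_scalable (@mres_lin _ _ _ M _ _ fl)) /=.
rewrite !scalerDr !scalerA twist_signSK [twist_sign k p.+1]twist_signS.
by rewrite addrC addrA [in RHS]addrAC.
Qed.

End Cochains.

Theorem proposition3p8 (k : fieldType) (C : FinCat) (A : AlgPresheaf k C)
    (M : BimodPresheaf A) (q : nat) :
  cochain_complexes_isomorphic
    (@is_GS_cochain k C A M q) (@is_BW_cochain k C A M q)
    (@GS_add k C A M q) (@GS_scale k C A M q)
    (@BW_add k C A M q) (@BW_scale k C A M q)
    (@d_simp k C A M q) (@delta_BW k C A M q).
Proof.
exists (@GS_to_BW k C A M q) => p; split; [|split; [|split; [|split]]].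
- exact: GS_to_BW_cochain.
- by move=> G H _ _; apply: (can_inj (@GS_to_BWK k C A M q p)).
- move=> K K_ml; exists (BW_to_GS K).
  by split; [apply: BW_to_GS_cochain | apply: BW_to_GSK].
- by move=> c G H _ _; apply: GS_to_BW_lin.
- by move=> G _; apply: GS_to_BW_d.
Qed.
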